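(* Let $(V,d)$ be a finite metric space with root $r\in V$ and let $\pi$ be any master tour on $(V,d)$. Let $\{q_v\}_{v\in V}$ and $\{\bar p_v\}_{v\in V}$ be probabilities with $0\le q_v\le\bar p_v\le 1$ for each $v\in V$. Then the expected latency of $\pi$ when each vertex $v$ is independently active with probability $q_v$ is at most the expected latency of $\pi$ when each vertex $v$ is independently active with probability $\bar p_v$.
   Context: A master tour $\pi$ is a tour starting at the root $r$ visiting all vertices of $V$. For an active set $A\subseteq V$, $\pi_A$ visits the vertices of $A$ starting from $r$ in the order of $\pi$ (shortcutting inactive vertices); the latency of $v\in A$ is the length of the path from $r$ to $v$ along $\pi_A$. The expected latency of $\pi$ under probabilities $\{x_v\}$ is $\mathbb{E}_A[\sum_{v\in A}(\text{latency of }v\text{ in }\pi_A)]$ where $A$ contains each $v$ independently with probability $x_v$. *)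

From mathcomp Require Import all_boot all_order all_algebra.
Set Implicit Arguments. Unset Strict Implicit. Unset Printing Implicit Defensive.
Import Order.TTheory GRing.Theory Num.Theory.
Local Open Scope ring_scope.

Section Defs.
Variables (R : realFieldType) (V : finType).

Definition is_metric (d : V -> V -> R) : Prop :=
  [/\ forall x y, 0 <= d x y,
      forall x y, d x y = 0 <-> x = y,
      forall x y, d x y = d y x &
      forall x y z, d x z <= d x y + d y z].

(* a master tour: a tour starting at the root r visiting every vertex of V
   exactly once, given by its vertex order *)
Definition master_tour (r : V) (pi : seq V) : Prop :=
  [/\ head r pi = r, uniq pi & forall v : V, v \in pi].

Definition path_len (d : V -> V -> R) (x : V) (s : seq V) : R :=
  \sum_(e <- pairmap d x s) e.

(* the active vertices of A in the order of pi (shortcutting inactive ones) *)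
Definition tour_on (pi : seq V) (A : {set V}) : seq V :=
  [seq v <- pi | v \in A].

Definition latency (d : V -> V -> R) (r : V) (pi : seq V) (A : {set V})
    (v : V) : R :=
  let s := tour_on pi A in path_len d r (take (index v s).+1 s).

Definition set_prob (x : V -> R) (A : {set V}) : R :=
  \prod_(v in A) x v * \prod_(v in ~: A) (1 - x v).

Definition expected_latency (d : V -> V -> R) (r : V) (pi : seq V)
    (x : V -> R) : R :=
  \sum_(A : {set V}) set_prob x A * \sum_(v in A) latency d r pi A v.

End Defs.

(* Shortcutting a tour never makes it longer (triangle inequality), so the
   total latency of pi_A is monotone in the active set A.  Under a product
   distribution, the expectation of a monotone set function is nondecreasing
   in each coordinate probability: pairing every A containing u with A :\ u,
   the expectation is affine in x u with slope
   \sum_(A | u \in A) P(A) (f A - f (A :\ u)) >= 0, where P(A), the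
   probability of the pattern of A away from u, does not depend on x u.
   Raising the probabilities from q to pbar one vertex at a time gives the
   theorem. *)
From mathcomp Require Import all_boot all_order all_algebra.
From mathcomp Require Import ring.
Set Implicit Arguments. Unset Strict Implicit. Unset Printing Implicit Defensive.
Import Order.TTheory GRing.Theory Num.Theory.
Local Open Scope ring_scope.

Lemma take_index_filter (T : eqType) (P : pred T) (v : T) (s : seq T) : P v ->
  take (index v (filter P s)).+1 (filter P s) = filter P (take (index v s).+1 s).
Proof.
move=> Pv; elim: s => [|w s IHs] //=.
have [->|wv] := eqVneq w v; first by rewrite Pv /= eqxx !take0.
by case: (P w) => /=; rewrite ?(negbTE wv) IHs.
Qed.

Section Latency.
Variables (R : realFieldType) (V : finType) (d : V -> V -> R).
Hypothesis d_ge0 : forall x y, 0 <= d x y.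
Hypothesis d_triangle : forall x y z, d x z <= d x y + d y z.

Lemma path_len_cons x y s : path_len d x (y :: s) = d x y + path_len d y s.
Proof. by rewrite /path_len /= big_cons. Qed.

Lemma path_len_ge0 x s : 0 <= path_len d x s.
Proof. by elim: s x => [|y s IHs] x; rewrite ?path_len_cons ?addr_ge0 // /path_len big_nil. Qed.

Lemma path_len_shortcut x y s : path_len d x s <= d x y + path_len d y s.
Proof.
case: s => [|z s]; first by rewrite /path_len big_nil addr0.
by rewrite !path_len_cons addrA lerD2r.
Qed.

Lemma path_len_subseq x s t : subseq s t -> path_len d x s <= path_len d x t.
Proof.
case/subseqP=> m _ ->; elim: t m x => [|y t IHt] [|[] m] x //=.
- by rewrite {1}/path_len big_nil path_len_ge0.
- by rewrite !path_len_cons lerD2l.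
- by rewrite path_len_cons (le_trans (path_len_shortcut x y _)) // lerD2l.
Qed.

Lemma latency_subset r pi (A B : {set V}) v : A \subset B -> v \in A ->
  latency d r pi A v <= latency d r pi B v.
Proof.
move=> sAB vA; have vB := subsetP sAB v vA.
rewrite /latency /tour_on (@take_index_filter _ (mem A)) // (@take_index_filter _ (mem B)) //.
apply: path_len_subseq; rewrite subseq_filter filter_subseq andbT.
by apply/allP => w; rewrite mem_filter => /andP[/(subsetP sAB)].
Qed.

Definition total_latency r pi (A : {set V}) : R :=
  \sum_(v in A) latency d r pi A v.

Lemma total_latency_subset r pi :
  {homo total_latency r pi : A B / A \subset B >-> A <= B}.
Proof.
move=> A B sAB; rewrite /total_latency [leRHS](big_setID A) (setIidPr sAB) /=.
rewrite -[leLHS]addr0 lerD ?sumr_ge0 // => [|v _]; last exact: path_len_ge0.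
by apply: ler_sum => v; apply: latency_subset.
Qed.

End Latency.

Section Expectation.
Variables (R : realFieldType) (V : finType).
Implicit Types (x y : V -> R) (A : {set V}) (f : {set V} -> R).

Definition expectation x f : R := \sum_A set_prob x A * f A.

Lemma eq_expectation x y f : x =1 y -> expectation x f = expectation y f.
Proof.
move=> exy; apply: eq_bigr => A _; rewrite /set_prob.
by congr (_ * _ * _); apply: eq_bigr => v _; rewrite exy.
Qed.

Definition coord_prob x A v : R := if v \in A then x v else 1 - x v.

Lemma set_prob_coord x A : set_prob x A = \prod_v coord_prob x A v.
Proof.
rewrite /set_prob (bigID (mem A) predT) /=; congr (_ * _).
  by apply: eq_bigr => v vA; rewrite /coord_prob vA.
apply: eq_big => v; first by rewrite in_setC.
by rewrite /coord_prob in_setC => /negbTE ->.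
Qed.

Definition toggle (u : V) A := if u \in A then A :\ u else u |: A.

Lemma toggleK u : involutive (toggle u).
Proof.
move=> A; rewrite /toggle; case: (boolP (u \in A)) => uA.
  by rewrite setD11 setD1K.
by rewrite setU11 setU1K.
Qed.

Lemma in_toggle u A v : v != u -> (v \in toggle u A) = (v \in A).
Proof. by move=> vu; rewrite /toggle; case: ifP; rewrite !inE (negbTE vu). Qed.

Lemma expectation_le_coord x y u f :
  {homo f : A B / A \subset B >-> A <= B} ->
  (forall v, v != u -> y v = x v) -> x u <= y u ->
  (forall v, 0 <= x v <= 1) ->
  expectation x f <= expectation y f.
Proof.
move=> f_mono yx xy_u x01.
pose P A := \prod_(v | v != u) coord_prob x A v.
have set_probE z A : (forall v, v != u -> z v = x v) ->
    set_prob z A = coord_prob z A u * P A.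
  move=> zx; rewrite set_prob_coord (bigD1 u) //=; congr (_ * _).
  by apply: eq_bigr => v vu; rewrite /coord_prob zx.
have P_ge0 A : 0 <= P A.
  apply: prodr_ge0 => v _; have /andP[x0 x1] := x01 v.
  by rewrite /coord_prob; case: ifP; rewrite ?subr_ge0.
have P_toggle A : P (toggle u A) = P A.
  by apply: eq_bigr => v vu; rewrite /coord_prob in_toggle.
rewrite -subr_ge0.
have -> : expectation y f - expectation x f = (y u - x u) *
    (\sum_(A : {set V} | u \in A) P A * f A - \sum_(A : {set V} | u \notin A) P A * f A).
  rewrite /expectation -sumrB (bigID (fun A : {set V} => u \in A)) /=.
  rewrite mulrBr !mulr_sumr -sumrN; congr (_ + _); apply: eq_bigr => A uA.
    by rewrite (set_probE y) ?(set_probE x) // /coord_prob uA; ring.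
  by rewrite (set_probE y) ?(set_probE x) // /coord_prob (negbTE uA); ring.
rewrite mulr_ge0 ?subr_ge0 //.
rewrite [leLHS](reindex_inj (inv_inj (toggleK u))) /=.
rewrite (eq_bigl (fun A : {set V} => u \in A)) => [|A]; last first.
  by rewrite /toggle; case: ifP; rewrite ?setD11 ?setU11.
apply: ler_sum => A uA; rewrite P_toggle ler_wpM2l // f_mono //.
by rewrite /toggle uA subsetDl.
Qed.

Lemma expectation_le x y f :
  {homo f : A B / A \subset B >-> A <= B} ->
  (forall v, 0 <= x v) -> (forall v, x v <= y v) -> (forall v, y v <= 1) ->
  expectation x f <= expectation y f.
Proof.
move=> f_mono x0 xy y1.
pose z (s : seq V) v := if v \in s then y v else x v.
have z01 s v : 0 <= z s v <= 1.
  rewrite /z; case: ifP => _; apply/andP; split => //.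
  - exact: le_trans (x0 v) (xy v).
  - exact: le_trans (xy v) (y1 v).
suff le_z s : expectation x f <= expectation (z s) f.
  by rewrite (eq_expectation f (_ : y =1 z (enum V))) // => v; rewrite /z mem_enum.
elim: s => [|u s IHs]; first by rewrite (eq_expectation f (_ : x =1 z [::])).
apply: (le_trans IHs); apply: (expectation_le_coord (u := u)) => //.
- by move=> v vu; rewrite /z in_cons (negbTE vu).
- by rewrite /z in_cons eqxx; case: ifP.
Qed.

End Expectation.

Theorem lemma2 (R : realFieldType) (V : finType) (d : V -> V -> R) (r : V)
    (pi : seq V) (q pbar : V -> R) :
  is_metric d -> master_tour r pi ->
  (forall v, 0 <= q v) -> (forall v, q v <= pbar v) -> (forall v, pbar v <= 1) ->
  expected_latency d r pi q <= expected_latency d r pi pbar.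
Proof.
case=> d_ge0 _ _ d_triangle _ q_ge0 q_le_pbar pbar_le1.
apply: (expectation_le (f := total_latency d r pi)) => //.
exact: total_latency_subset.
Qed.
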